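(* Let $Q$ be a finite quiver with an automorphism $\mathfrak a$ and $k$ a field. Every ii-representation $X$ of $(Q,\mathfrak a)$ is isomorphic to a finite direct sum $Y_1\oplus\dots\oplus Y_m$ of ii-indecomposables, and this decomposition is unique up to isomorphism and reordering of the summands (Krull–Remak–Schmidt theorem for ii-representations).
   Context: For a finite-dimensional representation $X$ of $Q$ over $k$, ${}^{\mathfrak a}X$ is defined by $({}^{\mathfrak a}X)_i=X_{\mathfrak a^{-1}(i)}$ and $({}^{\mathfrak a}X)_\rho=X_{\mathfrak a^{-1}(\rho)}$. $X$ is an ii-representation if ${}^{\mathfrak a}X\cong X$; it is an ii-indecomposable if it is a nonzero ii-representation not isomorphic to a direct sum of two nonzero ii-representations. *)

From HB Require Import structures.
From mathcomp Require Import all_boot all_order all_algebra.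
Set Implicit Arguments. Unset Strict Implicit. Unset Printing Implicit Defensive.
Import GRing.Theory.
Local Open Scope ring_scope.

Section Quiver.
Variables (V A : finType) (s t : A -> V).

Record qaut := QAut {
  av : V -> V; aa : A -> A; avi : V -> V; aai : A -> A;
  avK : cancel av avi; aviK : cancel avi av;
  aaK : cancel aa aai; aaiK : cancel aai aa;
  aa_s : forall r, s (aa r) = av (s r);
  aa_t : forall r, t (aa r) = av (t r) }.

Lemma aai_s (a : qaut) r : s (aai a r) = avi a (s r).
Proof. by rewrite -{2}(aaiK a r) aa_s avK. Qed.
Lemma aai_t (a : qaut) r : t (aai a r) = avi a (t r).
Proof. by rewrite -{2}(aaiK a r) aa_t avK. Qed.

Variable k : fieldType.

(* Finite-dimensional representation: X_i = k^(rdim i) (row vectors),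
   X_rho : X_(s rho) -> X_(t rho) acting by x |-> x *m rmap rho. *)
Record rep := Rep { rdim : V -> nat;
                    rmap : forall r : A, 'M[k]_(rdim (s r), rdim (t r)) }.

(* Twisted representation ^a X: (^aX)_i = X_(a^-1 i), (^aX)_rho = X_(a^-1 rho). *)
Definition twist (a : qaut) (X : rep) : rep :=
  @Rep (fun i => rdim X (avi a i))
       (fun r => castmx (congr1 (rdim X) (aai_s a r), congr1 (rdim X) (aai_t a r))
                        (rmap X (aai a r))).

Definition is_hom (X Y : rep) (f : forall i, 'M[k]_(rdim X i, rdim Y i)) :=
  forall r, rmap X r *m f (t r) = f (s r) *m rmap Y r.

Definition rep_iso (X Y : rep) : Prop :=
  exists (f : forall i, 'M[k]_(rdim X i, rdim Y i))
         (g : forall i, 'M[k]_(rdim Y i, rdim X i)),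
    is_hom f /\ forall i, f i *m g i = 1%:M /\ g i *m f i = 1%:M.

Definition rzero : rep := @Rep (fun _ => 0%N) (fun _ => 0).

Definition rsum (X Y : rep) : rep :=
  @Rep (fun i => (rdim X i + rdim Y i)%N)
       (fun r => block_mx (rmap X r) 0 0 (rmap Y r)).

Definition bigsum m (Y : 'I_m -> rep) : rep :=
  foldr rsum rzero [seq Y i | i <- enum 'I_m].

Definition rep_nonzero (X : rep) : Prop := exists i, rdim X i <> 0%N.

Definition ii_rep (a : qaut) (X : rep) : Prop := rep_iso (twist a X) X.

Definition ii_indec (a : qaut) (X : rep) : Prop :=
  [/\ rep_nonzero X, ii_rep a X &
      ~ exists Y Z, [/\ rep_nonzero Y, rep_nonzero Z, ii_rep a Y, ii_rep a Z &
                        rep_iso X (rsum Y Z)]].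

End Quiver.

From Stdlib Require Import Permutation Classical.
From mathcomp Require Import all_boot all_order all_algebra.
Set Implicit Arguments. Unset Strict Implicit. Unset Printing Implicit Defensive.
Import GRing.Theory.
Local Open Scope ring_scope.

(* Endomorphisms of an indecomposable representation are invertible or
   invertible after subtracting 1 (Fitting's lemma, using a polynomial that
   annihilates all components of the endomorphism). This gives the exchange
   property and the cancellation of indecomposable direct summands.
   An ii-indecomposable Y decomposes into indecomposables that are pairwise
   non-isomorphic and form a single orbit under twisting: a twist-stable set of
   pairwise non-isomorphic summands is already an ii-summand of Y, and its
   complement is ii by cancellation, hence zero. Two ii-indecomposables sharing
   an indecomposable summand U are therefore both isomorphic to the sum over the
   twist orbit of U, and uniqueness follows by exchanging such summands one at
   a time. *)

Section ListFacts.
Variable T : Type.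
Implicit Types (x : T) (l : seq T).

Lemma In_cat x l1 l2 : List.In x (l1 ++ l2) <-> List.In x l1 \/ List.In x l2.
Proof. by elim: l1 => [|y l1 IH] /=; [tauto | rewrite IH; tauto]. Qed.

Lemma In_split_cat x l : List.In x l -> exists l1 l2, l = l1 ++ x :: l2.
Proof.
elim: l => [|y l IH] //= [->|/IH [l1 [l2 ->]]]; first by exists [::], l.
by exists (y :: l1), l2.
Qed.

Lemma Permutation_middle_cat x l1 l2 : Permutation (l1 ++ x :: l2) (x :: l1 ++ l2).
Proof.
elim: l1 => [|y l1 IH] /=; first exact: Permutation_refl.
exact: Permutation_trans (perm_skip y IH) (perm_swap _ _ _).
Qed.

Lemma Permutation_size l l' : Permutation l l' -> size l = size l'.
Proof. by elim=> //= [? ? ? _ -> | ? ? ? _ -> _ ->]. Qed.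

Lemma In_map (U : Type) (f : T -> U) l y :
  List.In y (map f l) <-> exists x, y = f x /\ List.In x l.
Proof.
elim: l => [|x l IH] /=; first by split=> // -[? []].
rewrite IH; split.
  by case=> [<-|[x' [-> ?]]]; [exists x; split; [|left] | exists x'; split; [|right]].
by case=> x' [-> [<-|?]]; [left | right; exists x'].
Qed.

Lemma In_map_mem (U : Type) (f : T -> U) x l : List.In x l -> List.In (f x) (map f l).
Proof. by move=> x_l; apply/In_map; exists x. Qed.

Lemma Permutation_partition (P : T -> Prop) l : exists l1 l2, [/\ Permutation l (l1 ++ l2),
  (forall x, List.In x l1 -> P x) & (forall x, List.In x l2 -> ~ P x)].
Proof.
elim: l => [|x l [l1 [l2 [l_perm Pl1 nPl2]]]]; first by exists [::], [::].
have [Px|nPx] := classic (P x).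
  exists (x :: l1), l2; split=> [|y [<-|]|] //; [exact: perm_skip | exact: Pl1].
exists l1, (x :: l2); split=> [|//|y [<-|]] //; last exact: nPl2.
exact: Permutation_trans (perm_skip x l_perm) (Permutation_sym (Permutation_middle_cat _ _ _)).
Qed.

Lemma In_nth x0 l i : (i < size l)%N -> List.In (nth x0 l i) l.
Proof. by elim: l i => // x l IH [|i] /=; [left | move/IH; right]. Qed.

Lemma map_nth_enum_ord x0 l : [seq nth x0 l i | i : 'I_(size l) <- enum 'I_(size l)] = l.
Proof. by rewrite -[RHS](mkseq_nth x0) /mkseq -val_enum_ord -map_comp. Qed.

Lemma Forall2_size (U : Type) (R : T -> U -> Prop) l1 (l2 : seq U) :
  List.Forall2 R l1 l2 -> size l1 = size l2.
Proof. by elim=> //= x y l1' l2' _ _ ->. Qed.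

Lemma Forall2_nth (U : Type) (R : T -> U -> Prop) l1 (l2 : seq U) x0 y0 i :
  List.Forall2 R l1 l2 -> (i < size l1)%N -> R (nth x0 l1 i) (nth y0 l2 i).
Proof. by move=> R12; elim: R12 i => // x y l1' l2' Rxy _ IH [|i] //= /IH. Qed.

End ListFacts.

Lemma Permutation_perm_eq (T : eqType) (l1 l2 : seq T) : Permutation l1 l2 -> perm_eq l1 l2.
Proof.
elim=> [|x l l' _ IH|x y l|l l' l'' _ IH1 _ IH2].
- exact: perm_refl.
- by rewrite perm_cons.
- by apply/permP => q /=; rewrite addnCA.
- exact: perm_trans IH1 IH2.
Qed.

Lemma Forall2_enum_bijective (T : Type) m n (F : 'I_m -> T) (R : T -> 'I_n -> Prop) js :
  Permutation (enum 'I_n) js -> List.Forall2 R (map F (enum 'I_m)) js ->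
  m = n /\ exists sigma : 'I_m -> 'I_n, bijective sigma /\ forall i, R (F i) (sigma i).
Proof.
move=> js_perm FRjs; have size_js := Forall2_size FRjs.
rewrite size_map size_enum_ord in size_js.
have mn : m = n by rewrite size_js -(Permutation_size js_perm) size_enum_ord.
subst n; split => //.
have js_uniq : uniq js by rewrite -(perm_uniq (Permutation_perm_eq js_perm)) enum_uniq.
exists (fun i => nth i js i); split.
  apply: injF_bij => i j ij.
  have ij' : nth i js i = nth i js j by rewrite ij (set_nth_default i) // -size_js.
  by apply/val_inj/eqP; rewrite -(nth_uniq i _ _ js_uniq) -?size_js ?ltn_ord // ij'.
move=> i; have := Forall2_nth (F i) i FRjs (i := i).
by rewrite size_map size_enum_ord ltn_ord (nth_map i) ?size_enum_ord // nth_ord_enum; apply.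
Qed.

Section Representations.
Variables (V A : finType) (s t : A -> V) (k : fieldType).
Local Notation rp := (rep s t k).
Local Notation hom X Y f := (@is_hom V A s t k X Y f).
Local Notation iso := (@rep_iso V A s t k).
Local Notation rzero := (rzero s t k).

Lemma hom_id (X : rp) : hom X X (fun i => 1%:M).
Proof. by move=> r; rewrite mulmx1 mul1mx. Qed.

Lemma hom_comp (X Y Z : rp) f g : hom X Y f -> hom Y Z g ->
  hom X Z (fun i => f i *m g i).
Proof. by move=> hf hg r; rewrite mulmxA hf -!mulmxA hg. Qed.

Lemma homD (X Y : rp) f g : hom X Y f -> hom X Y g ->
  hom X Y (fun i => f i + g i).
Proof. by move=> hf hg r; rewrite mulmxDr mulmxDl hf hg. Qed.

Lemma homN (X Y : rp) f : hom X Y f -> hom X Y (fun i => - f i).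
Proof. by move=> hf r; rewrite mulmxN mulNmx hf. Qed.

Lemma homB (X Y : rp) f g : hom X Y f -> hom X Y g ->
  hom X Y (fun i => f i - g i).
Proof. by move=> hf hg; apply: homD => //; apply: homN. Qed.

Lemma hom_inv (X Y : rp) f g : hom X Y f ->
  (forall i, f i *m g i = 1%:M) -> (forall i, g i *m f i = 1%:M) -> hom Y X g.
Proof.
move=> hf fg gf r.
rewrite -[LHS]mul1mx -(gf (s r)) -!mulmxA; congr (_ *m _).
by rewrite !mulmxA -hf -mulmxA fg mulmx1.
Qed.

Lemma hom_invmx (X : rp) f : hom X X f -> (forall i, f i \in unitmx) ->
  hom X X (fun i => invmx (f i)).
Proof. by move=> hf u; apply: (hom_inv hf) => i; rewrite ?mulmxV ?mulVmx. Qed.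

Lemma iso_homP (X Y : rp) : iso X Y <-> exists f g,
  [/\ hom X Y f, hom Y X g, (forall i, f i *m g i = 1%:M) & (forall i, g i *m f i = 1%:M)].
Proof.
split=> [[f [g [hf fg]]]|[f [g [hf _ fg gf]]]]; last by exists f, g.
exists f, g; split => // [|i|i]; try by case: (fg i).
by apply: (hom_inv hf) => i; case: (fg i).
Qed.

Lemma iso_refl (X : rp) : iso X X.
Proof.
apply/iso_homP; exists (fun i => 1%:M), (fun i => 1%:M).
by split=> [||i|i]; rewrite ?mulmx1 //; apply: hom_id.
Qed.

Lemma iso_sym (X Y : rp) : iso X Y -> iso Y X.
Proof. by case/iso_homP=> f [g [hf hg fg gf]]; apply/iso_homP; exists g, f; split. Qed.

Lemma iso_trans (X Y Z : rp) : iso X Y -> iso Y Z -> iso X Z.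
Proof.
case/iso_homP=> f [g [hf hg fg gf]] /iso_homP[f' [g' [hf' hg' fg' gf']]].
apply/iso_homP; exists (fun i => f i *m f' i), (fun i => g' i *m g i).
split; try exact: hom_comp.
  by move=> i; rewrite mulmxA -(mulmxA (f i)) fg' mulmx1 fg.
by move=> i; rewrite mulmxA -(mulmxA (g' i)) gf mulmx1 gf'.
Qed.

Local Notation inl_mx := (row_mx 1%:M 0).
Local Notation inr_mx := (row_mx 0 1%:M).
Local Notation prl_mx := (col_mx 1%:M 0).
Local Notation prr_mx := (col_mx 0 1%:M).

Lemma hom_row_mx (T X Y : rp) f g : hom T X f -> hom T Y g ->
  hom T (rsum X Y) (fun i => row_mx (f i) (g i)).
Proof.
move=> hf hg r /=; rewrite mul_mx_row mul_row_block ?mulmx0 ?mul0mx.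
by rewrite addr0 add0r hf hg.
Qed.

Lemma hom_col_mx (X Y T : rp) f g : hom X T f -> hom Y T g ->
  hom (rsum X Y) T (fun i => col_mx (f i) (g i)).
Proof.
move=> hf hg r /=; rewrite !mul_col_mx !mul_row_col ?mulmx0 ?mul0mx.
by rewrite ?addr0 ?add0r hf hg.
Qed.

Lemma hom_inl (X Y : rp) : hom X (rsum X Y) (fun i => inl_mx).
Proof. by apply: hom_row_mx; [apply: hom_id | move=> r; rewrite mulmx0 mul0mx]. Qed.

Lemma hom_inr (X Y : rp) : hom Y (rsum X Y) (fun i => inr_mx).
Proof. by apply: hom_row_mx; [move=> r; rewrite mulmx0 mul0mx | apply: hom_id]. Qed.

Lemma hom_prl (X Y : rp) : hom (rsum X Y) X (fun i => prl_mx).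
Proof. by apply: hom_col_mx; [apply: hom_id | move=> r; rewrite mulmx0 mul0mx]. Qed.

Lemma hom_prr (X Y : rp) : hom (rsum X Y) Y (fun i => prr_mx).
Proof. by apply: hom_col_mx; [move=> r; rewrite mulmx0 mul0mx | apply: hom_id]. Qed.

Lemma inl_prl m n : row_mx 1%:M (0 : 'M[k]_(m, n)) *m prl_mx = 1%:M.
Proof. by rewrite mul_row_col mulmx1 mul0mx addr0. Qed.
Lemma inr_prr m n : row_mx (0 : 'M[k]_(n, m)) 1%:M *m prr_mx = 1%:M.
Proof. by rewrite mul_row_col mulmx1 mul0mx add0r. Qed.
Lemma inl_prr m n : row_mx 1%:M (0 : 'M[k]_(m, n)) *m prr_mx = 0.
Proof. by rewrite mul_row_col mulmx0 mul0mx addr0. Qed.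
Lemma inr_prl m n : row_mx (0 : 'M[k]_(n, m)) 1%:M *m prl_mx = 0.
Proof. by rewrite mul_row_col mulmx0 mul0mx addr0. Qed.

Lemma prl_inl_add_prr_inr m n :
  prl_mx *m inl_mx + prr_mx *m inr_mx = 1%:M :> 'M[k]_(m + n).
Proof.
rewrite !mul_col_row ?mulmx1 ?mulmx0 ?mul0mx ?mul1mx add_block_mx ?addr0 ?add0r.
by rewrite -scalar_mx_block.
Qed.

Lemma mulmx_prl_inl_add_prr_inr p q m n (B : 'M[k]_(p, m + n)) (C : 'M[k]_(m + n, q)) :
  B *m prl_mx *m inl_mx *m C + B *m prr_mx *m inr_mx *m C = B *m C.
Proof.
rewrite -!mulmxA -mulmxDr (mulmxA prl_mx) (mulmxA prr_mx) -mulmxDl.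
by rewrite prl_inl_add_prr_inr mul1mx.
Qed.

Lemma mulmx_inl_prl p m n (B : 'M[k]_(p, m)) :
  B *m row_mx 1%:M (0 : 'M[k]_(m, n)) *m prl_mx = B.
Proof. by rewrite -mulmxA inl_prl mulmx1. Qed.
Lemma mulmx_inr_prr p m n (B : 'M[k]_(p, n)) :
  B *m row_mx (0 : 'M[k]_(n, m)) 1%:M *m prr_mx = B.
Proof. by rewrite -mulmxA inr_prr mulmx1. Qed.
Lemma mulmx_inl_prr p m n (B : 'M[k]_(p, m)) :
  B *m row_mx 1%:M (0 : 'M[k]_(m, n)) *m prr_mx = 0.
Proof. by rewrite -mulmxA inl_prr mulmx0. Qed.
Lemma mulmx_inr_prl p m n (B : 'M[k]_(p, n)) :
  B *m row_mx (0 : 'M[k]_(n, m)) 1%:M *m prl_mx = 0.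
Proof. by rewrite -mulmxA inr_prl mulmx0. Qed.

Ltac biprod_simpl := rewrite ?mulmxA ?mulmx_inl_prl ?mulmx_inl_prr ?mulmx_inr_prl
  ?mulmx_inr_prr ?inl_prl ?inr_prr ?inl_prr ?inr_prl
  ?mul0mx ?mulmx0 ?mul1mx ?mulmx1 ?add0r ?addr0.

Lemma biprod_cross m n1 n2 (j : 'M[k]_(n1, m)) p (j' : 'M[k]_(n2, m)) p' :
  j *m p = 1%:M -> j' *m p' = 1%:M -> p *m j + p' *m j' = 1%:M -> j *m p' = 0.
Proof.
move=> ejp ejp' eS; have := congr1 (fun M => j *m M *m p') eS.
rewrite /= mulmx1 mulmxDr mulmxDl !mulmxA ejp mul1mx -!mulmxA ejp' mulmx1.
by move/eqP; rewrite -subr_eq0 addrK => /eqP.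
Qed.

Lemma biprod_iso (X Y1 Y2 : rp) j1 p1 j2 p2 :
  hom Y1 X j1 -> hom X Y1 p1 -> hom Y2 X j2 -> hom X Y2 p2 ->
  (forall i, j1 i *m p1 i = 1%:M) -> (forall i, j2 i *m p2 i = 1%:M) ->
  (forall i, p1 i *m j1 i + p2 i *m j2 i = 1%:M) ->
  iso X (rsum Y1 Y2).
Proof.
move=> hj1 hp1 hj2 hp2 e1 e2 e.
exists (fun i => row_mx (p1 i) (p2 i)), (fun i => col_mx (j1 i) (j2 i)).
split; first exact: hom_row_mx.
move=> i; rewrite mul_row_col e mul_col_row e1 e2 (biprod_cross (e1 i) (e2 i)) //.
by rewrite (biprod_cross (e2 i) (e1 i)) -?scalar_mx_block // addrC.
Qed.

Lemma rsumC (X Y : rp) : iso (rsum X Y) (rsum Y X).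
Proof.
apply: (biprod_iso (hom_inr X Y) (hom_prr X Y) (hom_inl X Y) (hom_prl X Y)).
- by move=> i; rewrite inr_prr.
- by move=> i; rewrite inl_prl.
by move=> i; rewrite addrC prl_inl_add_prr_inr.
Qed.

Lemma rsumA (X Y Z : rp) : iso (rsum (rsum X Y) Z) (rsum X (rsum Y Z)).
Proof.
apply: (biprod_iso (hom_comp (hom_inl X Y) (hom_inl (rsum X Y) Z))
          (hom_comp (hom_prl (rsum X Y) Z) (hom_prl X Y))
          (hom_col_mx (hom_comp (hom_inr X Y) (hom_inl (rsum X Y) Z)) (hom_inr (rsum X Y) Z))
          (hom_row_mx (hom_comp (hom_prl (rsum X Y) Z) (hom_prr X Y)) (hom_prr (rsum X Y) Z))).
- by move=> i /=; biprod_simpl.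
- by move=> i /=; rewrite mul_col_row; biprod_simpl; rewrite -scalar_mx_block.
move=> i /=; rewrite mul_row_col; biprod_simpl.
by rewrite addrA mulmx_prl_inl_add_prr_inr prl_inl_add_prr_inr.
Qed.

Lemma rsum_iso (X X' Y Y' : rp) : iso X X' -> iso Y Y' -> iso (rsum X Y) (rsum X' Y').
Proof.
case/iso_homP=> f [g [hf hg fg gf]] /iso_homP[f' [g' [hf' hg' fg' gf']]].
apply: (biprod_iso (hom_comp hg (hom_inl X Y)) (hom_comp (hom_prl X Y) hf)
          (hom_comp hg' (hom_inr X Y)) (hom_comp (hom_prr X Y) hf')).
- by move=> i; rewrite mulmxA -(mulmxA (g i)) inl_prl mulmx1 gf.
- by move=> i; rewrite mulmxA -(mulmxA (g' i)) inr_prr mulmx1 gf'.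
move=> i; rewrite !mulmxA -(mulmxA _ (f i)) -(mulmxA _ (f' i)) fg fg'.
by rewrite !mulmx1 prl_inl_add_prr_inr.
Qed.

Lemma iso_rdim (X Y : rp) : iso X Y -> forall i, rdim X i = rdim Y i.
Proof.
have le_rdim (X' Y' : rp) : iso X' Y' -> forall i, (rdim X' i <= rdim Y' i)%N.
  case=> f [g [_ fg]] i; case: (fg i) => e _.
  have := mxrankM_maxl (f i) (g i); rewrite e mxrank1 => le_rank.
  exact: leq_trans le_rank (rank_leq_col _).
by move=> h i; apply/eqP; rewrite eqn_leq !le_rdim //; apply: iso_sym.
Qed.

Lemma iso_rzero (X : rp) : (forall i, rdim X i = 0%N) -> iso X rzero.
Proof.
move=> X0; exists (fun i => 0), (fun i => 0); split; first by move=> r; rewrite mulmx0 mul0mx.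
move=> i; split; last by apply/matrixP => -[].
have flat0 n : n = 0%N -> (0 : 'M[k]_(n, 0)) *m (0 : 'M_(0, n)) = 1%:M.
  by move=> ->; apply/matrixP => -[].
exact: flat0.
Qed.

Lemma rsumr0 (X : rp) : iso (rsum X rzero) X.
Proof.
apply/iso_homP; exists (fun i => prl_mx), (fun i => inl_mx); split => [||i|i].
- exact: hom_prl.
- exact: hom_inl.
- have := @prl_inl_add_prr_inr (rdim X i) 0.
  by rewrite [1%:M : 'M_0]flatmx0 col_mx0 mul0mx addr0.
- exact: inl_prl.
Qed.

Lemma rsum0r (X : rp) : iso (rsum rzero X) X.
Proof. exact: iso_trans (rsumC _ _) (rsumr0 X). Qed.

Definition totdim (X : rp) := (\sum_(i : V) rdim X i)%N.

Lemma totdim_iso (X Y : rp) : iso X Y -> totdim X = totdim Y.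
Proof. by move=> h; apply: eq_bigr => i _; apply: iso_rdim. Qed.

Lemma totdim_rsum (X Y : rp) : totdim (rsum X Y) = (totdim X + totdim Y)%N.
Proof. exact: big_split. Qed.

Lemma totdim_rzero : totdim rzero = 0%N.
Proof. exact: big1. Qed.

Lemma rep_nonzeroP (X : rp) : rep_nonzero X <-> (0 < totdim X)%N.
Proof.
rewrite /totdim lt0n sum_nat_eq0 negb_forall; split=> [[i /eqP Xi]|/existsP[i]].
  by apply/existsP; exists i.
by rewrite negb_imply /= => /eqP Xi; exists i.
Qed.

Lemma not_nonzero_iso_rzero (X : rp) : ~ rep_nonzero X -> iso X rzero.
Proof.
move=> X0; apply: iso_rzero => i.
by apply: NNPP => Xi; apply: X0; exists i.
Qed.

Definition bigrsum (l : seq rp) : rp := foldr (@rsum V A s t k) rzero l.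

Lemma bigrsum_cat l1 l2 : iso (bigrsum (l1 ++ l2)) (rsum (bigrsum l1) (bigrsum l2)).
Proof.
elim: l1 => [|x l1 IH] /=; first exact: iso_sym (rsum0r _).
exact: iso_trans (rsum_iso (iso_refl _) IH) (iso_sym (rsumA _ _ _)).
Qed.

Lemma bigrsum_perm l1 l2 : Permutation l1 l2 -> iso (bigrsum l1) (bigrsum l2).
Proof.
elim=> [|x l l' _ IH|x y l|l l' l'' _ IH1 _ IH2] /=.
- exact: iso_refl.
- exact: rsum_iso (iso_refl _) IH.
- apply: iso_trans (iso_sym (rsumA _ _ _)) _.
  exact: iso_trans (rsum_iso (rsumC _ _) (iso_refl _)) (rsumA _ _ _).
- exact: iso_trans IH1 IH2.
Qed.

Definition summand (U X : rp) := exists W, iso X (rsum U W).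

Section IdempotentImage.
Variables (n : nat) (E : 'M[k]_n).
Hypothesis idE : E *m E = E.

Lemma row_base_mul_idem : row_base E *m E = row_base E.
Proof.
have : (row_base E <= E)%MS by rewrite eq_row_base.
by case/submxP => D ->; rewrite -mulmxA idE.
Qed.

Lemma idem_pinv_row_base : E *m pinvmx (row_base E) *m row_base E = E.
Proof. by rewrite mulmxKpV // eq_row_base. Qed.

Lemma row_base_idem_pinv : row_base E *m (E *m pinvmx (row_base E)) = 1%:M.
Proof. by rewrite mulmxA row_base_mul_idem mulmxVp // row_base_free. Qed.

End IdempotentImage.

Lemma idem_split (X : rp) e : hom X X e -> (forall i, e i *m e i = e i) ->
  exists (Y : rp) (j : forall i, 'M[k]_(rdim Y i, rdim X i))
         (p : forall i, 'M[k]_(rdim X i, rdim Y i)),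
    [/\ hom Y X j, hom X Y p, (forall i, j i *m p i = 1%:M),
        (forall i, p i *m j i = e i) & (forall i, rdim Y i = \rank (e i))].
Proof.
move=> he ide; pose p i := e i *m pinvmx (row_base (e i)).
pose Y : rp := @Rep V A s t k (fun i => \rank (e i))
   (fun r => row_base (e (s r)) *m rmap X r *m p (t r)).
exists Y, (fun i => row_base (e i)), p; split => // [r|r|i|i] /=.
- by rewrite /p -mulmxA idem_pinv_row_base // -mulmxA he mulmxA row_base_mul_idem.
- rewrite (mulmxA (rmap X r)) he (mulmxA (p (s r))) (mulmxA (p (s r))).
  rewrite idem_pinv_row_base // [RHS]mulmxA -[in RHS](mulmxA (e (s r))) he.
  by rewrite mulmxA ide.
- exact: row_base_idem_pinv.
- exact: idem_pinv_row_base.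
Qed.

Lemma idem_biprod (X : rp) e : hom X X e -> (forall i, e i *m e i = e i) ->
  exists Y1 Y2 : rp, [/\ iso X (rsum Y1 Y2),
     (forall i, rdim Y1 i = \rank (e i)) & (forall i, rdim Y2 i = \rank (1%:M - e i))].
Proof.
move=> he ide.
have he' : hom X X (fun i => 1%:M - e i) by apply: homB => //; apply: hom_id.
have ide' i : (1%:M - e i) *m (1%:M - e i) = 1%:M - e i.
  by rewrite mulmxBl mul1mx mulmxBr mulmx1 ide subrr subr0.
have [Y1 [j1 [p1 [hj1 hp1 jp1 pj1 d1]]]] := idem_split he ide.
have [Y2 [j2 [p2 [hj2 hp2 jp2 pj2 d2]]]] := idem_split he' ide'.
exists Y1, Y2; split => //.
by apply: (biprod_iso hj1 hp1 hj2 hp2 jp1 jp2) => i; rewrite pj1 pj2 addrC subrK.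
Qed.

Lemma retract_summand (X U : rp) j p : hom U X j -> hom X U p ->
  (forall i, j i *m p i = 1%:M) -> summand U X.
Proof.
move=> hj hp jp.
have he : hom X X (fun i => 1%:M - p i *m j i).
  by apply: homB; [apply: hom_id | apply: hom_comp].
have ide i : (1%:M - p i *m j i) *m (1%:M - p i *m j i) = 1%:M - p i *m j i.
  rewrite mulmxBl mul1mx mulmxBr mulmx1 !mulmxA -(mulmxA (p i)) jp mulmx1.
  by rewrite subrr subr0.
have [W [j' [p' [hj' hp' jp' pj' _]]]] := idem_split he ide.
exists W; apply: (biprod_iso hj hp hj' hp' jp jp') => i.
by rewrite pj' addrC subrK.
Qed.

(* [horner_mx] extended to square matrices of size 0, where it can only be 0. *)
Definition horner_mxz n : 'M[k]_n -> {poly k} -> 'M[k]_n :=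
  match n with 0 => fun _ _ => 0 | n'.+1 => fun B p => horner_mx B p end.

Lemma horner_mxzD n (B : 'M[k]_n) p q :
  horner_mxz B (p + q) = horner_mxz B p + horner_mxz B q.
Proof. by case: n B => [|n] B; [apply/matrixP => -[] | apply: rmorphD]. Qed.

Lemma horner_mxzM n (B : 'M[k]_n) p q :
  horner_mxz B (p * q) = horner_mxz B p *m horner_mxz B q.
Proof. by case: n B => [|n] B; [apply/matrixP => -[] | apply: rmorphM]. Qed.

Lemma horner_mxz1 n (B : 'M[k]_n) : horner_mxz B 1 = 1%:M.
Proof. by case: n B => [|n] B; [apply/matrixP => -[] | apply: rmorph1]. Qed.

Lemma horner_mxzX n (B : 'M[k]_n) : horner_mxz B 'X = B.
Proof. by case: n B => [|n] B; [apply/matrixP => -[] | apply: horner_mx_X]. Qed.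

Lemma horner_mxzXsub1 n (B : 'M[k]_n) : horner_mxz B ('X - 1) = B - 1%:M.
Proof.
case: n B => [|n] B; first by apply/matrixP => -[].
by rewrite /= rmorphB /= horner_mx_X rmorph1.
Qed.

Lemma horner_mxz_char_poly n (B : 'M[k]_n) p : char_poly B %| p -> horner_mxz B p = 0.
Proof.
case: n B => [|n] B; first by move=> _; apply/matrixP => -[].
by move=> /divpK <-; rewrite /= rmorphM /= Cayley_Hamilton mulr0.
Qed.

Lemma horner_mxz_unit n (B : 'M[k]_n) p q :
  coprimep p q -> horner_mxz B q = 0 -> horner_mxz B p \in unitmx.
Proof.
case/Bezout_eq1_coprimepP=> u /(congr1 (horner_mxz B)).
rewrite horner_mxz1 horner_mxzD !horner_mxzM => + q0.
by rewrite q0 mulmx0 addr0 => /mulmx1_unit[].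
Qed.

Lemma mulmx_horner_mxz m n (M : 'M[k]_(m, n)) (Bm : 'M[k]_m) (Bn : 'M[k]_n) p :
  Bm *m M = M *m Bn -> M *m horner_mxz Bn p = horner_mxz Bm p *m M.
Proof.
case: m M Bm => [|m] M Bm hM; first by apply/matrixP => -[].
case: n M Bn hM => [|n] M Bn hM; first by apply/matrixP => ? -[].
elim/poly_ind: p => [|p c IH]; first by rewrite /= !rmorph0 mulmx0 mul0mx.
rewrite /= !rmorphD !rmorphM /= !horner_mx_X !horner_mx_C -!mulmxE.
rewrite mulmxDr mulmxDl mul_mx_scalar mul_scalar_mx; congr (_ + _).
by rewrite mulmxA IH -!mulmxA hM.
Qed.

Lemma hom_horner_mxz (X : rp) f p : hom X X f -> hom X X (fun i => horner_mxz (f i) p).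
Proof. by move=> hf r; apply: mulmx_horner_mxz; rewrite hf. Qed.

(* [ii_indec a] unfolds to [indec_in (ii_rep a)]. *)
Definition indec_in (Q : rp -> Prop) (X : rp) :=
  [/\ rep_nonzero X, Q X & ~ exists Y Z,
      [/\ rep_nonzero Y, rep_nonzero Z, Q Y, Q Z & iso X (rsum Y Z)]].

Definition indec := indec_in (fun _ => True).

Lemma indec_nonzero (U : rp) : indec U -> rep_nonzero U.
Proof. by case. Qed.

Lemma indec_idem (U : rp) e : indec U -> hom U U e -> (forall i, e i *m e i = e i) ->
  (forall i, e i = 0) \/ (forall i, e i = 1%:M).
Proof.
case=> _ _ Uindec he ide; have [Y1 [Y2 [UY d1 d2]]] := idem_biprod he ide.
apply: NNPP => e01; apply: Uindec; exists Y1, Y2; split => //.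
- apply: NNPP => Y10; apply: e01; left => i; apply/eqP; rewrite -mxrank_eq0 -d1.
  by apply/eqP; apply: NNPP => ?; apply: Y10; exists i.
- apply: NNPP => Y20; apply: e01; right => i; apply/eqP; rewrite -subr_eq0 -oppr_eq0.
  by rewrite opprB -mxrank_eq0 -d2; apply/eqP; apply: NNPP => ?; apply: Y20; exists i.
Qed.

(* A nonzero polynomial [P] annihilates every [f i]; writing
   [P = q * 'X^m] with [q(0) != 0], a Bezout relation between the coprime factors
   gives an idempotent endomorphism [e], projecting onto the part where [f] is
   invertible along the part where it is nilpotent; [e] must be 0 or 1. *)
Lemma indec_local (U : rp) f : indec U -> hom U U f ->
  (forall i, f i \in unitmx) \/ (forall i, f i - 1%:M \in unitmx).
Proof.
move=> Uindec hf; pose P := \prod_(i : V) char_poly (f i).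
have P0 i : horner_mxz (f i) P = 0.
  by apply: horner_mxz_char_poly; rewrite /P (bigD1 i) //= dvdp_mulr.
have nzP : P != 0.
  by apply: monic_neq0; apply: monic_prod => i _; apply: char_poly_monic.
have [m [q nq0 Pq]] := multiplicity_XsubC P 0; rewrite nzP /= in nq0.
rewrite polyC0 subr0 in Pq.
have cXq : coprimep ('X^m) q.
  by apply: coprimep_expl; rewrite coprimep_sym -[X in coprimep _ X]subr0 -polyC0 coprimep_XsubC.
have [u Bezout] := Bezout_eq1_coprimepP _ _ cXq.
pose e i := horner_mxz (f i) (u.1 * 'X^m).
have e_compl i : horner_mxz (f i) (u.2 * q) = 1%:M - e i.
  by rewrite -(horner_mxz1 (f i)) -Bezout horner_mxzD addrC addKr.
have e_mul_compl i : e i *m (1%:M - e i) = 0.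
  rewrite -e_compl -horner_mxzM mulrACA -mulrA (mulrC 'X^m) -Pq.
  by rewrite mulrA horner_mxzM P0 mulmx0.
have ide i : e i *m e i = e i.
  by move: (e_mul_compl i); rewrite mulmxBr mulmx1 => /eqP; rewrite subr_eq0 => /eqP.
have [e0|e1] := indec_idem Uindec (fun r => hom_horner_mxz _ hf r) ide.
- right => i; rewrite -horner_mxzXsub1; apply: (@horner_mxz_unit _ _ _ ('X^m)).
    by rewrite coprimep_sym coprimep_expl // coprimep_XsubC rootX oner_eq0.
  rewrite -[LHS]mulmx1.
  have -> : 1%:M = horner_mxz (f i) (u.2 * q) by rewrite e_compl /e e0 subr0.
  by rewrite -horner_mxzM mulrCA (mulrC 'X^m) -Pq horner_mxzM P0 mulmx0.
- left => i; rewrite -(horner_mxzX (f i)); apply: (@horner_mxz_unit _ _ _ q).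
    by rewrite coprimep_sym -[X in coprimep _ X]subr0 -polyC0 coprimep_XsubC.
  rewrite -[LHS]mulmx1 -(e1 i) -horner_mxzM mulrCA -Pq.
  by rewrite horner_mxzM P0 mulmx0.
Qed.

Lemma indec_summand_split (U W Q : rp) j1 p1 j2 p2 : indec U ->
  hom U W j1 -> hom W U p1 -> hom U Q j2 -> hom Q U p2 ->
  (forall i, j1 i *m p1 i + j2 i *m p2 i = 1%:M) -> summand U W \/ summand U Q.
Proof.
move=> Uindec hj1 hp1 hj2 hp2 e.
have retract (Z : rp) j p : hom U Z j -> hom Z U p ->
    (forall i, j i *m p i \in unitmx) -> summand U Z.
  move=> hj hp u; have hjp : hom U U (fun i => j i *m p i) by apply: hom_comp.
  apply: (retract_summand hj (hom_comp hp (hom_invmx hjp u))) => i.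
  by rewrite mulmxA mulmxV.
have [u1|u1] := indec_local Uindec (hom_comp hj1 hp1); first by left; apply: retract u1.
right; apply: retract hj2 hp2 _ => i.
have -> : j2 i *m p2 i = (-1) *: (j1 i *m p1 i - 1%:M).
  by rewrite scaleN1r opprB -(e i) addrAC subrr add0r.
by rewrite unitmxZ ?u1 // unitrN1.
Qed.

Lemma hom_eq (X Y : rp) f g : (forall i, f i = g i) -> hom X Y f -> hom X Y g.
Proof. by move=> fg hf r; rewrite -!fg. Qed.

Section BlockDecomposition.
Variables (m1 m2 n1 n2 : nat) (M : 'M[k]_(m1 + m2, n1 + n2)).

Lemma ulsubmxE : ulsubmx M = inl_mx *m M *m prl_mx.
Proof. by rewrite -{2}(submxK M) mul_row_block mul_row_col; biprod_simpl. Qed.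
Lemma ursubmxE : ursubmx M = inl_mx *m M *m prr_mx.
Proof. by rewrite -{2}(submxK M) mul_row_block mul_row_col; biprod_simpl. Qed.
Lemma dlsubmxE : dlsubmx M = inr_mx *m M *m prl_mx.
Proof. by rewrite -{2}(submxK M) mul_row_block mul_row_col; biprod_simpl. Qed.
Lemma drsubmxE : drsubmx M = inr_mx *m M *m prr_mx.
Proof. by rewrite -{2}(submxK M) mul_row_block mul_row_col; biprod_simpl. Qed.

End BlockDecomposition.

Lemma ulsubmxM m1 m2 n1 n2 q1 q2 (F : 'M[k]_(m1 + m2, n1 + n2)) (G : 'M[k]_(n1 + n2, q1 + q2)) :
  ulsubmx (F *m G) = ulsubmx F *m ulsubmx G + ursubmx F *m dlsubmx G.
Proof. by rewrite -{1}(submxK F) -{1}(submxK G) mulmx_block block_mxKul. Qed.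

Lemma ulsubmx1 m1 m2 : ulsubmx (1%:M : 'M[k]_(m1 + m2)) = 1%:M.
Proof. by rewrite (scalar_mx_block m1 m2) block_mxKul. Qed.

Section BlockHom.
Variables (U P U' Q : rp) (f : forall i, 'M[k]_(rdim (rsum U P) i, rdim (rsum U' Q) i)).
Hypothesis hf : hom (rsum U P) (rsum U' Q) f.

Lemma hom_ulsubmx : hom U U' (fun i => ulsubmx (f i)).
Proof.
apply: hom_eq (fun i => esym (ulsubmxE _)) _.
exact: hom_comp (hom_comp (hom_inl U P) hf) (hom_prl U' Q).
Qed.

Lemma hom_ursubmx : hom U Q (fun i => ursubmx (f i)).
Proof.
apply: hom_eq (fun i => esym (ursubmxE _)) _.
exact: hom_comp (hom_comp (hom_inl U P) hf) (hom_prr U' Q).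
Qed.

Lemma hom_dlsubmx : hom P U' (fun i => dlsubmx (f i)).
Proof.
apply: hom_eq (fun i => esym (dlsubmxE _)) _.
exact: hom_comp (hom_comp (hom_inr U P) hf) (hom_prl U' Q).
Qed.

Lemma hom_drsubmx : hom P Q (fun i => drsubmx (f i)).
Proof.
apply: hom_eq (fun i => esym (drsubmxE _)) _.
exact: hom_comp (hom_comp (hom_inr U P) hf) (hom_prr U' Q).
Qed.

End BlockHom.

Lemma indec_summand_rsum (U P W Q : rp) : indec U -> iso (rsum U P) (rsum W Q) ->
  summand U W \/ summand U Q.
Proof.
move=> Uindec /iso_homP[f [g [hf hg fg _]]].
apply: (indec_summand_split Uindec (hom_ulsubmx hf) (hom_ulsubmx hg)
          (hom_ursubmx hf) (hom_dlsubmx hg)) => i.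
by rewrite -ulsubmxM fg ulsubmx1.
Qed.

Definition schur_complement u p q (F : 'M[k]_(u + p, u + q)) :=
  drsubmx F - dlsubmx F *m invmx (ulsubmx F) *m ursubmx F.

Lemma schur_complement_inv u p q (F : 'M[k]_(u + p, u + q)) (G : 'M[k]_(u + q, u + p)) :
  F *m G = 1%:M -> G *m F = 1%:M -> ulsubmx F \in unitmx ->
  schur_complement F *m drsubmx G = 1%:M /\ drsubmx G *m schur_complement F = 1%:M.
Proof.
rewrite /schur_complement -{1 2}(submxK F) -{1 2}(submxK G) !mulmx_block.
rewrite (scalar_mx_block u p) (scalar_mx_block u q).
case/eq_block_mx => _ FG_ur _ FG_dr /eq_block_mx[_ _ GF_dl GF_dr] ua.
have bd : ursubmx F *m drsubmx G = - (ulsubmx F *m ursubmx G).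
  by apply/eqP; rewrite -addr_eq0 addrC FG_ur.
have dc : drsubmx G *m dlsubmx F = - (dlsubmx G *m ulsubmx F).
  by apply/eqP; rewrite -addr_eq0 addrC GF_dl.
split.
  rewrite mulmxBl -!mulmxA bd !mulmxN (mulmxA (invmx _)) mulVmx // mul1mx opprK.
  by rewrite addrC.
rewrite mulmxBr !mulmxA dc !mulNmx -(mulmxA (dlsubmx G)) mulmxV // mulmx1 opprK.
by rewrite addrC.
Qed.

Lemma iso_cancel_ulunit (U P Q : rp) f g : hom (rsum U P) (rsum U Q) f ->
  (forall i, f i *m g i = 1%:M) -> (forall i, g i *m f i = 1%:M) ->
  (forall i, ulsubmx (f i) \in unitmx) -> iso P Q.
Proof.
move=> hf fg gf ua; exists (fun i => schur_complement (f i)), (fun i => drsubmx (g i)).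
split; last by move=> i; apply: schur_complement_inv (fg i) (gf i) (ua i).
apply: homB (hom_drsubmx hf) (hom_comp _ (hom_ursubmx hf)).
exact: hom_comp (hom_dlsubmx hf) (hom_invmx (hom_ulsubmx hf) ua).
Qed.

(* Composing with the unipotent automorphism [1 - N] of [U + Q], where [N]
   maps [U] into [Q] through a right inverse of [ursubmx f *m dlsubmx g],
   subtracts [1] from the upper-left block. *)
Lemma rsum_iso_ulsubmx_shift (U P Q : rp) f g :
  hom (rsum U P) (rsum U Q) f -> hom (rsum U Q) (rsum U P) g ->
  (forall i, f i *m g i = 1%:M) -> (forall i, g i *m f i = 1%:M) ->
  (forall i, ursubmx (f i) *m dlsubmx (g i) \in unitmx) ->
  exists f' g', [/\ hom (rsum U P) (rsum U Q) f', (forall i, f' i *m g' i = 1%:M),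
    (forall i, g' i *m f' i = 1%:M) & forall i, ulsubmx (f' i) = ulsubmx (f i) - 1%:M].
Proof.
move=> hf hg fg gf ucc.
pose r i := dlsubmx (g i) *m invmx (ursubmx (f i) *m dlsubmx (g i)).
pose N i : 'M_(rdim U i + rdim Q i) := prr_mx *m r i *m inl_mx.
have hN : hom (rsum U Q) (rsum U Q) N.
  apply: hom_comp (hom_inl U Q); apply: hom_comp (hom_prr U Q) _.
  exact: hom_comp (hom_dlsubmx hg) (hom_invmx (hom_comp (hom_ursubmx hf) (hom_dlsubmx hg)) ucc).
have NN i : N i *m N i = 0.
  by rewrite /N -!mulmxA (mulmxA inl_mx prr_mx) inl_prr !mul0mx !mulmx0.
have subN_addN i : (1%:M - N i) *m (1%:M + N i) = 1%:M.
  by rewrite mulmxBl mul1mx mulmxDr mulmx1 NN addr0 addrK.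
have addN_subN i : (1%:M + N i) *m (1%:M - N i) = 1%:M.
  by rewrite mulmxDl mul1mx mulmxBr mulmx1 NN subr0 subrK.
exists (fun i => f i *m (1%:M - N i)), (fun i => (1%:M + N i) *m g i); split.
- by apply: hom_comp hf (homB (hom_id _) hN).
- by move=> i; rewrite mulmxA -(mulmxA (f i)) subN_addN mulmx1 fg.
- by move=> i; rewrite mulmxA -(mulmxA _ (g i)) gf mulmx1 addN_subN.
move=> i; rewrite mulmxBr mulmx1 !ulsubmxE mulmxBr mulmxBl; congr (_ - _).
rewrite /N !mulmxA -!(mulmxA _ inl_mx prl_mx) inl_prl mulmx1 -ursubmxE.
by rewrite mulmxV.
Qed.

Lemma rsum_cancel_indec (U P Q : rp) : indec U -> iso (rsum U P) (rsum U Q) -> iso P Q.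
Proof.
move=> Uindec /iso_homP[f [g [hf hg fg gf]]].
have [ua|not_ua] := classic (forall i, ulsubmx (f i) \in unitmx).
  exact: iso_cancel_ulunit hf fg gf ua.
have ua1 : forall i, ulsubmx (f i) - 1%:M \in unitmx.
  by case: (indec_local Uindec (hom_ulsubmx hf)).
have uaa1 : forall i, ulsubmx (f i) *m ulsubmx (g i) - 1%:M \in unitmx.
  case: (indec_local Uindec (hom_comp (hom_ulsubmx hf) (hom_ulsubmx hg))) => // uaa.
  by case: not_ua => i; move: (uaa i); rewrite unitmx_mul => /andP[].
have ucc i : ursubmx (f i) *m dlsubmx (g i) \in unitmx.
  have -> : ursubmx (f i) *m dlsubmx (g i) =
      (-1) *: (ulsubmx (f i) *m ulsubmx (g i) - 1%:M).
    rewrite scaleN1r opprB -(ulsubmx1 (rdim U i) (rdim P i)) -(fg i) ulsubmxM.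
    by rewrite addrAC subrr add0r.
  by rewrite unitmxZ ?uaa1 // unitrN1.
have [f' [g' [hf' fg' gf' ul']]] := rsum_iso_ulsubmx_shift hf hg fg gf ucc.
by apply: (iso_cancel_ulunit hf' fg' gf') => i; rewrite ul' ua1.
Qed.

Lemma bigrsum_cancel us (P Q : rp) : (forall u, List.In u us -> indec u) ->
  iso (rsum (bigrsum us) P) (rsum (bigrsum us) Q) -> iso P Q.
Proof.
elim: us => [|u us IH] /= us_indec h.
  exact: iso_trans (iso_sym (rsum0r _)) (iso_trans h (rsum0r _)).
apply: IH => [v v_us|]; first by apply: us_indec; right.
apply: (rsum_cancel_indec (us_indec u (or_introl erefl))).
exact: iso_trans (iso_sym (rsumA _ _ _)) (iso_trans h (rsumA _ _ _)).
Qed.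

Lemma exists_indec_in_decomposition (Q : rp -> Prop) (X : rp) : Q X ->
  exists ys, (forall y, List.In y ys -> indec_in Q y) /\ iso X (bigrsum ys).
Proof.
have [N] := ubnP (totdim X); elim: N X => // N IH X ltXN QX.
have [nzX|zX] := classic (rep_nonzero X); last first.
  by exists [::]; split=> //; apply: not_nonzero_iso_rzero.
have [X_indec|X_dec] := classic (indec_in Q X).
  by exists [:: X]; split; [move=> y [<-|] | apply: iso_sym (rsumr0 X)].
have [Y [Z [/rep_nonzeroP nzY /rep_nonzeroP nzZ QY QZ XYZ]]] :
    exists Y Z, [/\ rep_nonzero Y, rep_nonzero Z, Q Y, Q Z & iso X (rsum Y Z)].
  by apply: NNPP => ndec; apply: X_dec.
have dimX := totdim_iso XYZ; rewrite totdim_rsum in dimX.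
have [|ys [ys_indec Yys]] := IH Y _ QY.
  by rewrite -ltnS (leq_trans _ ltXN) // dimX ltnS -addn1 leq_add2l.
have [|zs [zs_indec Zzs]] := IH Z _ QZ.
  by rewrite -ltnS (leq_trans _ ltXN) // dimX ltnS -add1n leq_add2r.
exists (ys ++ zs); split.
  by move=> u /In_cat[]; [apply: ys_indec | apply: zs_indec].
exact: iso_trans XYZ (iso_trans (rsum_iso Yys Zzs) (iso_sym (bigrsum_cat _ _))).
Qed.

Lemma summand_iso (U X Y : rp) : iso X Y -> summand U X -> summand U Y.
Proof. by move=> XY [W XUW]; exists W; apply: iso_trans (iso_sym XY) XUW. Qed.

Lemma summand_trans (U X Y : rp) : summand U X -> summand X Y -> summand U Y.
Proof.
move=> [W XUW] [W' YXW']; exists (rsum W W').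
exact: iso_trans YXW' (iso_trans (rsum_iso XUW (iso_refl _)) (rsumA _ _ _)).
Qed.

Lemma summand_rsum (U X : rp) : summand U (rsum U X).
Proof. by exists X; apply: iso_refl. Qed.

Lemma summand_bigrsum x l : List.In x l -> summand x (bigrsum l).
Proof.
move=> xl; have [l1 [l2 ->]] := In_split_cat xl; exists (bigrsum (l1 ++ l2)).
exact: bigrsum_perm (Permutation_middle_cat _ _ _).
Qed.

Lemma summand_nonzero (U X : rp) : summand U X -> rep_nonzero U -> rep_nonzero X.
Proof.
case=> W XUW; rewrite !rep_nonzeroP (totdim_iso XUW) totdim_rsum => ?.
exact: leq_trans (leq_addr _ _).
Qed.

Lemma rzero_nonzeroF : ~ rep_nonzero rzero.
Proof. by rewrite rep_nonzeroP totdim_rzero. Qed.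

Lemma indec_summand_indec (U W : rp) : indec U -> indec W -> summand U W -> iso U W.
Proof.
move=> [nzU _ _] [_ _ W_indec] [W' WUW'].
have [nzW'|zW'] := classic (rep_nonzero W').
  by case: W_indec; exists U, W'.
apply: iso_sym (iso_trans WUW' _).
exact: iso_trans (rsum_iso (iso_refl _) (not_nonzero_iso_rzero zW')) (rsumr0 _).
Qed.

Lemma indec_summand_bigrsum (U : rp) (J : Type) (F : J -> rp) (js : seq J) : indec U ->
  summand U (bigrsum (map F js)) ->
  exists j js', Permutation js (j :: js') /\ summand U (F j).
Proof.
move=> Uindec; elim: js => [|j js IH] /= Usum.
  by case: rzero_nonzeroF; apply: summand_nonzero Usum (indec_nonzero Uindec).
case: Usum => W /iso_sym/(indec_summand_rsum Uindec) [Uj|/IH [j' [js' [js_perm Uj']]]].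
  by exists j, js; split => //; apply: Permutation_refl.
exists j', (j :: js'); split => //.
exact: Permutation_trans (perm_skip j js_perm) (perm_swap _ _ _).
Qed.

Lemma indec_summand_bigrsum_iso (U : rp) ws : indec U ->
  (forall w, List.In w ws -> indec w) -> summand U (bigrsum ws) ->
  exists w, List.In w ws /\ iso U w.
Proof.
move=> Uindec ws_indec Usum.
have [|w [ws' [ws_perm Uw]]] := @indec_summand_bigrsum U _ id ws Uindec; first by rewrite map_id.
have w_ws : List.In w ws by apply: Permutation_in (Permutation_sym ws_perm) _; left.
by exists w; split => //; apply: indec_summand_indec Uindec (ws_indec w w_ws) Uw.
Qed.

Definition qaut_inv (b : qaut s t) : qaut s t :=
  @QAut V A s t (avi b) (aai b) (av b) (aa b) (aviK b) (avK b) (aaiK b) (aaK b)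
        (aai_s b) (aai_t b).

Lemma castmx_hom (X Y : rp) (f : forall i, 'M[k]_(rdim X i, rdim Y i)) r v w
    (ev : s r = v) (ew : t r = w) :
  rmap X r *m f (t r) = f (s r) *m rmap Y r ->
  castmx (congr1 (rdim X) ev, congr1 (rdim X) ew) (rmap X r) *m f w =
  f v *m castmx (congr1 (rdim Y) ev, congr1 (rdim Y) ew) (rmap Y r).
Proof. by case: v / ev; case: w / ew; rewrite !castmx_id. Qed.

Lemma twist_iso (b : qaut s t) (X Y : rp) : iso X Y -> iso (twist b X) (twist b Y).
Proof.
case=> f [g [hf fg]]; exists (fun i => f (avi b i)), (fun i => g (avi b i)).
by split=> [r|i]; [apply: (castmx_hom (aai_s b r) (aai_t b r) (hf (aai b r))) | apply: fg].
Qed.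

Lemma castmx_block_diag (X Y : rp) r v w (ev : s r = v) (ew : t r = w) :
  castmx (congr1 (rdim (rsum X Y)) ev, congr1 (rdim (rsum X Y)) ew)
     (block_mx (rmap X r) 0 0 (rmap Y r)) =
  block_mx (castmx (congr1 (rdim X) ev, congr1 (rdim X) ew) (rmap X r)) 0 0
           (castmx (congr1 (rdim Y) ev, congr1 (rdim Y) ew) (rmap Y r)).
Proof. by case: v / ev; case: w / ew; rewrite !castmx_id. Qed.

Lemma twist_rsum (b : qaut s t) (X Y : rp) :
  iso (twist b (rsum X Y)) (rsum (twist b X) (twist b Y)).
Proof.
exists (fun i => 1%:M), (fun i => 1%:M); split => [r|i]; last by rewrite mulmx1.
by rewrite mulmx1 mul1mx; apply: castmx_block_diag.
Qed.

Lemma twist_bigrsum (b : qaut s t) l : iso (twist b (bigrsum l)) (bigrsum (map (twist b) l)).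
Proof.
elim: l => [|x l IH] /=; first exact: iso_rzero.
exact: iso_trans (twist_rsum _ _ _) (rsum_iso (iso_refl _) IH).
Qed.

Lemma iso_castmx (X Y : rp) (ed : forall i, rdim X i = rdim Y i) :
  (forall r, castmx (ed (s r), ed (t r)) (rmap X r) = rmap Y r) -> iso X Y.
Proof.
move=> XY; exists (fun i => castmx (erefl, ed i) 1%:M), (fun i => castmx (ed i, erefl) 1%:M).
split=> [r|i].
  rewrite -XY; move: (ed (s r)) (ed (t r)).
  move: (rdim Y (s r)) (rdim Y (t r)) => n1 n2 e1 e2.
  by case: n1 / e1; case: n2 / e2; rewrite !castmx_id mulmx1 mul1mx.
by move: (ed i); move: (rdim Y i) => n e; case: n / e; rewrite !castmx_id mulmx1.
Qed.

Lemma castmx_rmap (X : rp) r r' (e : r = r')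
  (es : rdim X (s r) = rdim X (s r')) (et : rdim X (t r) = rdim X (t r')) :
  castmx (es, et) (rmap X r) = rmap X r'.
Proof.
case: r' / e in es et *.
by rewrite (eq_irrelevance es erefl) (eq_irrelevance et erefl) castmx_id.
Qed.

Lemma twistK (b : qaut s t) (X : rp) : iso (twist (qaut_inv b) (twist b X)) X.
Proof.
apply: (@iso_castmx (twist (qaut_inv b) (twist b X)) X (fun i => congr1 (rdim X) (avK b i))) => r.
by rewrite /= !castmx_comp; apply: castmx_rmap (aaK b r) _ _.
Qed.

Lemma twist_iso_inj (b : qaut s t) (X Y : rp) : iso (twist b X) (twist b Y) -> iso X Y.
Proof.
move=> h; apply: iso_trans (iso_sym (twistK b X)) _.
exact: iso_trans (twist_iso _ h) (twistK b Y).
Qed.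

Lemma twist_nonzero (b : qaut s t) (X : rp) : rep_nonzero X -> rep_nonzero (twist b X).
Proof. by case=> i Xi; exists (av b i); rewrite /= avK. Qed.

Lemma twist_indec (b : qaut s t) (X : rp) : indec X -> indec (twist b X).
Proof.
case=> nzX _ X_indec; split=> //; first exact: twist_nonzero.
case=> Y [Z [nzY nzZ _ _ bXYZ]]; apply: X_indec.
exists (twist (qaut_inv b) Y), (twist (qaut_inv b) Z); split => //; try exact: twist_nonzero.
apply: iso_trans (iso_sym (twistK b X)) _.
exact: iso_trans (twist_iso _ bXYZ) (twist_rsum _ _ _).
Qed.

Lemma twist_summand (b : qaut s t) (U X : rp) : summand U X -> summand (twist b U) (twist b X).
Proof.
by case=> W XUW; exists (twist b W); apply: iso_trans (twist_iso b XUW) (twist_rsum _ _ _).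
Qed.

Lemma bigrsum_nonzero l : (forall x, List.In x l -> indec x) -> l <> [::] ->
  rep_nonzero (bigrsum l).
Proof.
case: l => // x l l_indec _; apply: (@summand_nonzero x); first exact: summand_rsum.
by apply: indec_nonzero; apply: l_indec; left.
Qed.

Fixpoint pairwise_noniso (l : seq rp) : Prop :=
  if l is x :: l' then (forall y, List.In y l' -> ~ iso x y) /\ pairwise_noniso l'
  else True.

Lemma pairwise_noniso_perm l l' : Permutation l l' -> pairwise_noniso l -> pairwise_noniso l'.
Proof.
elim=> {l l'} [//|x l1 l2 p IH|x y l|l1 l2 l3 _ IH1 _ IH2] /=.
- case=> x_l1 /IH; split => // z /(Permutation_in _ (Permutation_sym p)).
  exact: x_l1.
- case=> y_xl [x_l nl]; split; last by split => // z z_l; apply: y_xl; right.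
  move=> z [<-|z_l] xz; last exact: x_l z_l xz.
  by apply: (y_xl x); [left | apply: iso_sym].
- by move/IH1/IH2.
Qed.

Lemma pairwise_noniso_catl l1 l2 : pairwise_noniso (l1 ++ l2) -> pairwise_noniso l1.
Proof.
elim: l1 => //= x l1 IH [x_l /IH nl1]; split => // z z_l1.
by apply: x_l; apply/In_cat; left.
Qed.

Definition iso_covered (l1 l2 : seq rp) :=
  forall x, List.In x l1 -> exists y, List.In y l2 /\ iso x y.

Lemma iso_covered_remove x l1 l2 y l3 : pairwise_noniso (x :: l1) -> iso x y ->
  iso_covered (x :: l1) (l2 ++ y :: l3) -> iso_covered l1 (l2 ++ l3).
Proof.
move=> [x_l1 _] xy cov z z_l1; have [w [/In_cat w_l zw]] := cov z (or_intror z_l1).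
case: w_l => [w_l2|[yw|w_l3]].
- by exists w; split => //; apply/In_cat; left.
- by case: (x_l1 z z_l1); apply: iso_trans xy _; rewrite yw; apply: iso_sym.
- by exists w; split => //; apply/In_cat; right.
Qed.

Lemma pairwise_noniso_size_leq l1 l2 : pairwise_noniso l1 -> iso_covered l1 l2 ->
  (size l1 <= size l2)%N.
Proof.
elim: l1 l2 => [|x l1 IH] //= l2 nl cov.
have [y [y_l2 xy]] := cov x (or_introl erefl).
have [l3 [l4 l2E]] := In_split_cat y_l2; rewrite l2E in cov *.
have := IH _ nl.2 (iso_covered_remove nl xy cov).
by rewrite !size_cat /= addnS ltnS.
Qed.

Lemma pairwise_noniso_bigrsum_iso l1 l2 : pairwise_noniso l1 ->
  size l1 = size l2 -> iso_covered l1 l2 -> iso (bigrsum l1) (bigrsum l2).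
Proof.
elim: l1 l2 => [|x l1 IH] /= l2 nl size_eq cov.
  by case: l2 size_eq cov => // _ _; apply: iso_refl.
have [y [y_l2 xy]] := cov x (or_introl erefl).
have [l3 [l4 l2E]] := In_split_cat y_l2; rewrite l2E in cov size_eq *.
apply: iso_trans _ (iso_sym (bigrsum_perm (Permutation_middle_cat y l3 l4))).
apply: rsum_iso xy (IH _ nl.2 _ (iso_covered_remove nl xy cov)).
by move: size_eq; rewrite !size_cat /= addnS => -[].
Qed.

Lemma exists_noniso_representatives ws : exists ss rest,
  [/\ Permutation ws (ss ++ rest), pairwise_noniso ss & iso_covered ws ss].
Proof.
elim: ws => [|w ws [ss [rest [ws_perm nss cov]]]]; first by exists [::], [::]; split=> // ? [].
have [[s0 [s0_ss ws0]]|new_w] := classic (exists s0, List.In s0 ss /\ iso w s0).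
  exists ss, (w :: rest); split => //.
    apply: Permutation_trans (perm_skip w ws_perm) _.
    exact: Permutation_sym (Permutation_middle_cat w ss rest).
  by move=> z [<-|/cov]; first by exists s0.
exists (w :: ss), rest; split => //.
- exact: perm_skip.
- by split => // z z_ss wz; apply: new_w; exists z.
move=> z [<-|/cov [s0 [s0_ss zs0]]]; first by exists w; split; [left | apply: iso_refl].
by exists s0; split => //; right.
Qed.

Section Twisting.
Variable qa : qaut s t.
Local Notation tw := (twist qa).

Definition twist_stable (l : seq rp) := iso_covered (map tw l) l.

Lemma twist_stable_ii l : pairwise_noniso l -> twist_stable l -> ii_rep qa (bigrsum l).
Proof.
move=> nl tl; apply: iso_trans (twist_bigrsum _ _) _.
apply: pairwise_noniso_bigrsum_iso => //; last by rewrite size_map.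
elim: l nl {tl} => //= x l IH [x_l nl]; split; last exact: IH.
by move=> z /In_map[y [-> y_l]] /twist_iso_inj; apply: x_l.
Qed.

Lemma ii_cancel (y Y : rp) us : (forall u, List.In u us -> indec u) ->
  ii_rep qa y -> ii_rep qa (bigrsum us) -> iso y (rsum (bigrsum us) Y) -> ii_rep qa Y.
Proof.
move=> us_indec iiy iius yY; apply: (bigrsum_cancel us_indec).
apply: iso_trans (rsum_iso (iso_sym iius) (iso_refl _)) _.
apply: iso_trans (iso_sym (twist_rsum _ _ _)) _.
exact: iso_trans (twist_iso _ (iso_sym yY)) (iso_trans iiy yY).
Qed.

Lemma ii_indec_twist_stable_rest_nil (y : rp) l1 l2 : ii_indec qa y -> l1 <> [::] ->
  (forall x, List.In x (l1 ++ l2) -> indec x) -> pairwise_noniso l1 ->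
  twist_stable l1 -> iso y (bigrsum (l1 ++ l2)) -> l2 = [::].
Proof.
case=> _ iiy y_indec l1_nil l_indec nl1 tl1 yl.
have l1_indec x : List.In x l1 -> indec x by move=> ?; apply: l_indec; apply/In_cat; left.
have l2_indec x : List.In x l2 -> indec x by move=> ?; apply: l_indec; apply/In_cat; right.
have yl12 := iso_trans yl (bigrsum_cat _ _); have iil1 := twist_stable_ii nl1 tl1.
apply: NNPP => l2_nil; case: y_indec; exists (bigrsum l1), (bigrsum l2).
split=> //; [exact: bigrsum_nonzero | exact: bigrsum_nonzero | exact: ii_cancel yl12].
Qed.

Definition twistn n (X : rp) := iter n tw X.

Lemma twistn_indec n (U : rp) : indec U -> indec (twistn n U).
Proof. by elim: n => //= n IH /IH; apply: twist_indec. Qed.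

Lemma twistn_summand n (U X : rp) : summand U X -> summand (twistn n U) (twistn n X).
Proof. by elim: n => //= n IH /IH; apply: twist_summand. Qed.

Lemma twistn_ii n (Y : rp) : ii_rep qa Y -> iso (twistn n Y) Y.
Proof.
move=> iiY; elim: n => [|n IH] /=; first exact: iso_refl.
exact: iso_trans (twist_iso qa IH) iiY.
Qed.

Lemma ii_indec_normal_form (y : rp) : ii_indec qa y -> exists ss, [/\ iso y (bigrsum ss),
  (forall x, List.In x ss -> indec x), pairwise_noniso ss & twist_stable ss].
Proof.
move=> y_iiindec; have [nzy iiy _] := y_iiindec.
have [ws [ws_indec yws]] := @exists_indec_in_decomposition (fun _ => True) y I.
have [ss [rest [ws_perm nss cov]]] := exists_noniso_representatives ws.
have ss_ws x : List.In x (ss ++ rest) -> List.In x ws.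
  exact: Permutation_in (Permutation_sym ws_perm).
have tss : twist_stable ss.
  move=> _ /In_map[x [-> x_ss]].
  have x_ws : List.In x ws by apply: ss_ws; apply/In_cat; left.
  have : summand (tw x) (bigrsum ws).
    apply: summand_iso (iso_trans iiy yws) (twist_summand qa _).
    exact: summand_iso (iso_sym yws) (summand_bigrsum x_ws).
  case/(indec_summand_bigrsum_iso (twist_indec qa (ws_indec x x_ws)) ws_indec) => w [w_ws xw].
  have [s0 [s0_ss ws0]] := cov w w_ws; exists s0; split => //.
  exact: iso_trans xw ws0.
have ss_nil : ss <> [::].
  move=> ss0; case: ws cov yws {ws_indec ws_perm ss_ws} => [|w ws'] cov yws.
    by move: nzy; rewrite rep_nonzeroP (totdim_iso yws) totdim_rzero.
  by have [s0 []] := cov w (or_introl erefl); rewrite ss0.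
have yss := iso_trans yws (bigrsum_perm ws_perm).
have l_indec x : List.In x (ss ++ rest) -> indec x by move/ss_ws; apply: ws_indec.
have rest0 := ii_indec_twist_stable_rest_nil y_iiindec ss_nil l_indec nss tss yss.
exists ss; split => [|x x_ss|//|//]; first by rewrite rest0 cats0 in yss.
by apply: l_indec; apply/In_cat; left.
Qed.

Lemma ii_indec_twist_orbit (y U : rp) : ii_indec qa y -> indec U -> summand U y ->
  exists ss, [/\ iso y (bigrsum ss), (forall x, List.In x ss -> indec x),
    pairwise_noniso ss & forall x, List.In x ss -> exists n, iso x (twistn n U)].
Proof.
move=> y_iiindec U_indec Uy.
have [ss [yss ss_indec nss tss]] := ii_indec_normal_form y_iiindec.
pose in_orbit x := exists n, iso x (twistn n U).
have [l1 [l2 [ss_perm l1_orb l2_orb]]] := Permutation_partition in_orbit ss.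
have l_ss x : List.In x (l1 ++ l2) -> List.In x ss.
  exact: Permutation_in (Permutation_sym ss_perm).
have orb_l1 x : List.In x ss -> in_orbit x -> List.In x l1.
  by move=> /(Permutation_in _ ss_perm) /In_cat[] // x_l2 /(l2_orb x x_l2).
have tl1 : twist_stable l1.
  move=> _ /In_map[x [-> x_l1]].
  have x_ss : List.In x ss by apply: l_ss; apply/In_cat; left.
  have [x' [x'_ss xx']] := tss _ (In_map_mem tw x_ss).
  exists x'; split => //; apply: orb_l1 => //.
  have [n xUn] := l1_orb x x_l1; exists n.+1.
  exact: iso_trans (iso_sym xx') (twist_iso qa xUn).
have l1_nil : l1 <> [::].
  have [w [w_ss Uw]] := indec_summand_bigrsum_iso U_indec ss_indec (summand_iso yss Uy).
  have : List.In w l1 by apply: orb_l1 => //; exists 0%N; apply: iso_sym.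
  by move=> + l10; rewrite l10.
have l2_nil := ii_indec_twist_stable_rest_nil y_iiindec l1_nil
  (fun x x_l => ss_indec x (l_ss x x_l))
  (pairwise_noniso_catl (pairwise_noniso_perm ss_perm nss)) tl1
  (iso_trans yss (bigrsum_perm ss_perm)).
exists ss; split => // x /(Permutation_in _ ss_perm).
by rewrite l2_nil cats0; apply: l1_orb.
Qed.

Lemma ii_indec_twistn_summand (w U : rp) ss : ii_indec qa w -> iso w (bigrsum ss) ->
  (forall x, List.In x ss -> indec x) -> indec U -> summand U w ->
  forall n, exists x, List.In x ss /\ iso (twistn n U) x.
Proof.
move=> [_ iiw _] wss ss_indec U_indec Uw n.
apply: indec_summand_bigrsum_iso (twistn_indec n U_indec) ss_indec _.
exact: summand_iso (iso_trans (twistn_ii n iiw) wss) (twistn_summand n Uw).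
Qed.

Lemma ii_indec_common_summand (y z U : rp) : ii_indec qa y -> ii_indec qa z -> indec U ->
  summand U y -> summand U z -> iso y z.
Proof.
move=> y_iiindec z_iiindec U_indec Uy Uz.
have [ys [yys ys_indec nys ys_orb]] := ii_indec_twist_orbit y_iiindec U_indec Uy.
have [zs [zzs zs_indec nzs zs_orb]] := ii_indec_twist_orbit z_iiindec U_indec Uz.
have cover (w : rp) l1 l2 : ii_indec qa w -> iso w (bigrsum l2) ->
    (forall x, List.In x l2 -> indec x) -> summand U w ->
    (forall x, List.In x l1 -> exists n, iso x (twistn n U)) -> iso_covered l1 l2.
  move=> w_iiindec wl2 l2_indec Uw l1_orb x /l1_orb [n xUn].
  have [x' [x'_l2 Unx']] := ii_indec_twistn_summand w_iiindec wl2 l2_indec U_indec Uw n.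
  by exists x'; split => //; apply: iso_trans xUn Unx'.
have cov_yz := cover z ys zs z_iiindec zzs zs_indec Uz ys_orb.
have cov_zy := cover y zs ys y_iiindec yys ys_indec Uy zs_orb.
have size_eq : size ys = size zs.
  by apply/eqP; rewrite eqn_leq !pairwise_noniso_size_leq.
exact: iso_trans yys (iso_trans (pairwise_noniso_bigrsum_iso nys size_eq cov_yz) (iso_sym zzs)).
Qed.

Lemma ii_indec_exchange (y W : rp) (J : Type) (Z : J -> rp) js : ii_indec qa y ->
  (forall j, ii_indec qa (Z j)) -> iso (rsum y W) (bigrsum (map Z js)) ->
  exists j js', [/\ Permutation js (j :: js'), iso y (Z j) & iso W (bigrsum (map Z js'))].
Proof.
move=> y_iiindec Z_iiindec yWZ.
have [us [us_indec yus]] := @exists_indec_in_decomposition (fun _ => True) y I.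
case: us us_indec yus => [|u us] us_indec yus.
  by case: y_iiindec; rewrite rep_nonzeroP (totdim_iso yus) totdim_rzero.
have u_indec : indec u by apply: us_indec; left.
have uy : summand u y by apply: summand_iso (iso_sym yus) (summand_rsum _ _).
have [j [js' [js_perm uZj]]] := indec_summand_bigrsum u_indec
  (summand_iso yWZ (summand_trans uy (summand_rsum _ _))).
have yZj := ii_indec_common_summand y_iiindec (Z_iiindec j) u_indec uy uZj.
exists j, js'; split => //; apply: (bigrsum_cancel us_indec).
apply: iso_trans (rsum_iso (iso_sym yus) (iso_refl _)) _.
apply: iso_trans (rsum_iso yus (iso_refl _)); apply: iso_trans yWZ _.
apply: iso_trans (bigrsum_perm (Permutation_map Z js_perm)) _.
exact: rsum_iso (iso_sym yZj) (iso_refl _).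
Qed.

Lemma ii_indec_decomposition_unique ys (J : Type) (Z : J -> rp) js :
  (forall y, List.In y ys -> ii_indec qa y) -> (forall j, ii_indec qa (Z j)) ->
  iso (bigrsum ys) (bigrsum (map Z js)) ->
  exists js', Permutation js js' /\ List.Forall2 (fun y j => iso y (Z j)) ys js'.
Proof.
elim: ys js => [|y ys IH] js ys_ii Z_ii /= yZ.
  case: js yZ => [|j js] /= yZ; first by exists [::]; split; [apply: Permutation_refl|].
  have [nzZj _ _] := Z_ii j; case: rzero_nonzeroF.
  exact: summand_nonzero (summand_iso (iso_sym yZ) (summand_rsum _ _)) nzZj.
have [j [js' [js_perm yZj ysZ]]] := ii_indec_exchange (ys_ii y (or_introl erefl)) Z_ii yZ.
have [js'' [js'_perm ysZ']] := IH js' (fun x x_ys => ys_ii x (or_intror x_ys)) Z_ii ysZ.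
exists (j :: js''); split; last by constructor.
exact: Permutation_trans js_perm (perm_skip j js'_perm).
Qed.

End Twisting.

End Representations.

Lemma bigsumE (V A : finType) (s t : A -> V) (k : fieldType) m (Y : 'I_m -> rep s t k) :
  bigsum Y = bigrsum [seq Y i | i <- enum 'I_m].
Proof. by []. Qed.

Theorem lemma3p1 (k : fieldType) (V A : finType) (s t : A -> V)
    (a : qaut s t) (X : rep s t k) :
  ii_rep a X ->
  (exists (m : nat) (Y : 'I_m -> rep s t k),
      (forall i, ii_indec a (Y i)) /\ rep_iso X (bigsum Y)) /\
  (forall (m n : nat) (Y : 'I_m -> rep s t k) (Z : 'I_n -> rep s t k),
      (forall i, ii_indec a (Y i)) -> (forall j, ii_indec a (Z j)) ->
      rep_iso X (bigsum Y) -> rep_iso X (bigsum Z) ->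
      m = n /\ exists sigma : 'I_m -> 'I_n,
        bijective sigma /\ forall i, rep_iso (Y i) (Z (sigma i))).
Proof.
move=> iiX; split.
  have [ys [ys_ii Xys]] := exists_indec_in_decomposition iiX.
  exists (size ys), (nth (rzero s t k) ys); split.
    by move=> i; apply: ys_ii; apply: In_nth.
  by rewrite bigsumE map_nth_enum_ord.
move=> m n Y Z Y_ii Z_ii XY XZ.
have Ys_ii y : List.In y (map Y (enum 'I_m)) -> ii_indec a y.
  by case/In_map=> i [-> _].
have [js [js_perm YZ]] := ii_indec_decomposition_unique Ys_ii Z_ii (iso_trans (iso_sym XY) XZ).
exact: Forall2_enum_bijective js_perm YZ.
Qed.
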